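(* Let $N\ge 2$ and $n,m\ge 1$. Let $\{\mathcal{G}_k : k\in\mathcal{P}\}$, $\mathcal{P}=\{1,\ldots,Q\}$, be a finite family of undirected weighted graphs on the node set $\{1,\ldots,N\}$ with weights $a^k_{ij}=a^k_{ji}\ge 0$, $a^k_{ii}=0$. Let $\sigma:[0,\infty)\to\mathcal{P}$ be a right-continuous, piecewise constant switching signal whose consecutive switching instants are separated by at least a dwell time $T_{\min}>0$. Assume: (i) there exists $T>0$ such that for every $t_0\ge 0$ the union graph $\bigcup_{t\in[t_0,t_0+T)}\mathcal{G}_{\sigma(t)}$ contains a directed spanning tree (equivalently, since the graphs are undirected, is connected); (ii) $A\in\mathbb{R}^{n\times n}$, $B\in\mathbb{R}^{n\times m}$ and the pair $(A,B)$ is stabilizable; (iii) there exists a symmetric positive definite matrix $P\in\mathbb{R}^{n\times n}$ such that $A^{\mathrm{T}}P+PA\le 0$ and the pair $(B^{\mathrm{T}}P,A)$ is observable. Let $\phi>0$ and $K=B^{\mathrm{T}}P$, and consider $$\dot{x}_i=Ax_i+\phi BK\sum_{j=1}^N a_{ij}^{\sigma(t)}(x_j-x_i),\qquad i=1,\ldots,N,\ x_i\in\mathbb{R}^n.$$ Then synchronization is achieved: for every initial condition, $\lim_{t\to\infty}\|x_i(t)-x_j(t)\|=0$ for all $i,j\in\{1,\ldots,N\}$.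
   Context: For a weighted digraph with weights $a_{ij}\ge0$, $a_{ij}>0$ means that $(j,i)$ is an edge (information flows from $j$ to $i$). A directed path is a sequence of edges $(i_1,i_2),(i_2,i_3),\ldots,(i_{q-1},i_q)$. A digraph contains a directed spanning tree if some node has a directed path to every other node. The union of a family of graphs on the same node set has as edge set the union of their edge sets. An undirected graph is one with symmetric weights $a_{ij}=a_{ji}$; each undirected edge counts as edges in both directions. *)

From HB Require Import structures.
From mathcomp Require Import all_boot all_order all_algebra.
From mathcomp Require Import all_classical all_reals all_analysis.
From mathcomp Require complex.
Import complex.ComplexField.
From Stdlib Require Import Relations.
Set Implicit Arguments. Unset Strict Implicit. Unset Printing Implicit Defensive.
Import Order.TTheory GRing.Theory Num.Theory.
Import numFieldNormedType.Exports.
Local Open Scope classical_set_scope.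
Local Open Scope ring_scope.

Definition complexify (R : rcfType) (n : nat) (M : 'M[R]_n) : 'M[complex.complex R]_n :=
  map_mx (@complex.real_complex_def R (Phant R)) M.

Definition hurwitz (R : rcfType) (n : nat) (M : 'M[R]_n) : Prop :=
  forall lam : complex.complex R, eigenvalue (complexify M) lam ->
    complex.Re lam < 0.

Definition stabilizable (R : rcfType) (n m : nat) (A : 'M[R]_n) (B : 'M[R]_(n, m)) : Prop :=
  exists F : 'M[R]_(m, n), hurwitz (A + B *m F).

Definition obs_mx (R : fieldType) (p n : nat) (C : 'M[R]_(p, n)) (A : 'M[R]_n) :=
  \mxcol_(k < n) (C *m A ^+ k).

Definition observable (R : fieldType) (p n : nat) (C : 'M[R]_(p, n)) (A : 'M[R]_n) : Prop :=
  \rank (obs_mx C A) = n.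

Definition qform (R : ringType) (n : nat) (M : 'M[R]_n) (v : 'cV[R]_n) : R :=
  (v^T *m M *m v) 0 0.

Definition sym_posdef (R : numDomainType) (n : nat) (P : 'M[R]_n) : Prop :=
  P^T = P /\ forall v : 'cV[R]_n, v != 0 -> 0 < qform P v.

(* M <= 0 in the sense of quadratic forms (M is symmetric in our use) *)
Definition neg_semidef (R : numDomainType) (n : nat) (M : 'M[R]_n) : Prop :=
  forall v : 'cV[R]_n, qform M v <= 0.

Definition undirected_weights (R : numDomainType) (N : nat) (a : 'M[R]_N) : Prop :=
  (forall i j, a i j = a j i) /\ (forall i j, 0 <= a i j) /\ (forall i, a i i = 0).

(* Edge (j,i) of the union graph of G_{sigma(t)}, t in [t0, t0+T):
   a_{ij}^{sigma(t)} > 0 for some such t. *)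
Definition union_edge (R : realType) (N Q : nat) (a : 'I_Q -> 'M[R]_N)
  (sigma : R -> 'I_Q) (t0 T : R) (j i : 'I_N) : Prop :=
  exists t : R, t0 <= t < t0 + T /\ 0 < a (sigma t) i j.

(* A digraph with edge relation E (E j i: edge from j to i) contains a directed
   spanning tree: some root has a directed path to every other node. *)
Definition has_spanning_tree (N : nat) (E : 'I_N -> 'I_N -> Prop) : Prop :=
  exists r : 'I_N, forall i : 'I_N, i <> r -> clos_trans _ E r i.

(* sigma : [0,oo) -> P is piecewise constant, right-continuous, with dwell time
   Tmin: switching instants 0 = s 0 < s 1 < ... with s (k+1) - s k >= Tmin and
   sigma constant on each [s k, s (k+1)). *)
Definition dwell_switching (R : realType) (Q : nat) (sigma : R -> 'I_Q) (Tmin : R) : Prop :=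
  0 < Tmin /\
  exists s : nat -> R, s 0%N = 0 /\ (forall k, s k + Tmin <= s k.+1) /\
    (forall k t, s k <= t < s k.+1 -> sigma t = sigma (s k)).

Definition has_right_deriv (R : realType) (V : normedModType R) (f : R -> V) (t : R) (v : V) : Prop :=
  (fun h : R => h^-1 *: (f (t + h) - f t)) @ (0 : R)^'+ --> v.

(* x solves the switched network dynamics on [0,oo): continuous for t > 0 and
   right-continuous at 0, with right derivative (which by right-continuity of
   sigma is the natural notion of solution) equal to the vector field at every t >= 0. *)
Definition network_solution (R : realType) (N Q n m : nat) (A : 'M[R]_n) (B : 'M[R]_(n, m))
  (K : 'M[R]_(m, n)) (phi : R) (a : 'I_Q -> 'M[R]_N) (sigma : R -> 'I_Q)
  (x : 'I_N -> R -> 'cV[R]_n) : Prop :=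
  forall i : 'I_N,
    (forall t : R, 0 < t -> {for t, continuous (x i)}) /\
    (forall t : R, 0 <= t ->
       has_right_deriv (x i) t
         (A *m x i t + phi *: (B *m K *m \sum_(j < N) a (sigma t) i j *: (x j t - x i t)))).

From HB Require Import structures.
From mathcomp Require Import all_boot all_order all_algebra.
From mathcomp Require Import all_classical all_reals all_analysis.
From mathcomp Require Import ring lra zify.
From Stdlib Require Import Relations.
Import Order.TTheory GRing.Theory Num.Theory.
Import numFieldNormedType.Exports.
Local Open Scope classical_set_scope.
Local Open Scope ring_scope.
Set Implicit Arguments. Unset Strict Implicit. Unset Printing Implicit Defensive.

(* The Lyapunov function [lyap] = sum_i x_i^T P x_i has right derivative at
   most [- phi] times the output disagreement sum_ij a_ij |K (x_i - x_j)|^2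
   along the active edges, because the coupling enters through a symmetric
   graph Laplacian.  So the states stay bounded, all derivatives are bounded,
   and the disagreement tends to 0: a dwell interval of fixed length on which it
   is large would lower [lyap] by a fixed amount.  Landau's inequality (a small
   function with bounded second derivative has a small derivative), applied on
   dwell intervals, then gives K A^p (x_i - x_j) -> 0 along active edges for
   every p, and observability of (K, A) gives x_i - x_j -> 0 along them.
   Finally, x_u - x_v can drift only slowly in the P-norm, so a difference that
   was small on an edge of the union graph over [t - T, t) is still small at t,
   and a spanning tree of that graph connects all the agents. *)

Section RightDerivative.
Variables (R : realType) (V : normedModType R).
Implicit Types (f g : R -> V) (t : R).

Lemma has_right_deriv_cst (c : V) t : has_right_deriv (fun=> c) t 0.
Proof.
rewrite /has_right_deriv; under eq_fun do rewrite subrr scaler0.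
exact: cvg_cst.
Qed.

Lemma has_right_derivD f g t u v :
  has_right_deriv f t u -> has_right_deriv g t v ->
  has_right_deriv (fun s => f s + g s) t (u + v).
Proof.
move=> Hf Hg; rewrite /has_right_deriv.
under eq_fun do rewrite /= opprD addrACA scalerDr.
exact: cvgD.
Qed.

Lemma has_right_derivZ (c : R) f t u :
  has_right_deriv f t u -> has_right_deriv (fun s => c *: f s) t (c *: u).
Proof.
move=> Hf; rewrite /has_right_deriv.
under eq_fun do rewrite -scalerBr scalerA mulrC -scalerA.
exact: cvgZl_tmp.
Qed.

Lemma has_right_derivN f t u :
  has_right_deriv f t u -> has_right_deriv (fun s => - f s) t (- u).
Proof.
move=> /(has_right_derivZ (c := -1)); rewrite scaleN1r.
by under eq_fun do rewrite scaleN1r.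
Qed.

Lemma has_right_derivB f g t u v :
  has_right_deriv f t u -> has_right_deriv g t v ->
  has_right_deriv (fun s => f s - g s) t (u - v).
Proof. by move=> Hf /has_right_derivN; apply: has_right_derivD. Qed.

Lemma has_right_deriv_sum (I : Type) (r : seq I) (P : pred I)
    (F : I -> R -> V) (D : I -> V) t :
  (forall i, P i -> has_right_deriv (F i) t (D i)) ->
  has_right_deriv (fun s => \sum_(i <- r | P i) F i s) t (\sum_(i <- r | P i) D i).
Proof.
move=> HF; elim: r => [|i r IH].
  by under eq_fun do rewrite big_nil; rewrite big_nil; apply: has_right_deriv_cst.
under eq_fun do rewrite big_cons; rewrite big_cons.
by case: ifP => Pi; [apply: has_right_derivD (HF i Pi) IH | apply: IH].
Qed.

Lemma has_right_deriv_cvg f t u :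
  has_right_deriv f t u -> f (t + h) @[h --> 0^'+] --> f t.
Proof.
move=> Hf; have -> : (fun h => f (t + h)) =
    (fun h => h *: (h^-1 *: (f (t + h) - f t)) + f t).
  apply/funext => h; have [->|h0] := eqVneq h 0; first by rewrite scale0r add0r addr0.
  by rewrite scalerA mulfV // scale1r subrK.
rewrite -[X in _ --> X]add0r; apply: cvgD; last exact: cvg_cst.
rewrite -(scale0r u); apply: cvgZ Hf.
by apply: cvg_at_right_filter; apply: cvg_id.
Qed.

End RightDerivative.

Section RealRightDerivative.
Variable R : realType.
Implicit Types (f g h : R -> R) (a b c t u v w : R).

Lemma has_right_derivMl c f t u :
  has_right_deriv f t u -> has_right_deriv (fun s => c * f s) t (c * u).
Proof. exact: has_right_derivZ. Qed.

Lemma has_right_derivM f g t u v :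
  has_right_deriv f t u -> has_right_deriv g t v ->
  has_right_deriv (fun s => f s * g s) t (u * g t + f t * v).
Proof.
move=> Hf Hg; have Cf := has_right_deriv_cvg Hf; rewrite /has_right_deriv.
have -> : (fun s => s^-1 *: (f (t + s) * g (t + s) - f t * g t)) =
    (fun s => (s^-1 *: (f (t + s) - f t)) * g t + f (t + s) * (s^-1 *: (g (t + s) - g t))).
  by apply/funext => s /=; rewrite /GRing.scale /=; ring.
by apply: cvgD; [apply: cvgMr_tmp | apply: cvgM].
Qed.

Lemma has_right_deriv_local_ub f t v M : has_right_deriv f t v -> v < M ->
  exists2 d, 0 < d & forall u, t < u < t + d -> f u - f t < M * (u - t).
Proof.
move=> Hf vM.
have : \forall s \near 0^'+, s^-1 *: (f (t + s) - f t) < M by apply: (cvgr_lt _ Hf).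
rewrite near_withinE => /nbhs_ballP [d d0 Hd].
exists d => // u /andP[tu utd]; have ut0 : 0 < u - t by rewrite subr_gt0.
have := Hd (u - t); rewrite /ball /= sub0r normrN gtr0_norm // ltrBlDl.
move=> /(_ utd ut0); rewrite (addrC t) subrK /GRing.scale /=.
by rewrite ltr_pdivrMl // mulrC.
Qed.

Lemma continuous_le_from_left f a c y : a < c -> {for c, continuous f} ->
  (forall u, a < u < c -> f u <= y) -> f c <= y.
Proof.
move=> ac fc fy; suff : [set z | z <= y] (f c) by [].
apply: (closed_cvg _ (@closed_le _ y) _ _ (cvg_at_left_filter fc)); near=> u; apply: fy.
by apply/andP; split; near: u; [apply: nbhs_left_gt | apply: nbhs_left_lt].
Unshelve. all: by end_near.
Qed.

Lemma mean_value_le_eps f a b M e : a <= b -> 0 < e ->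
  (forall t, a < t <= b -> {for t, continuous f}) ->
  (forall t, a <= t < b -> exists2 v, has_right_deriv f t v & v <= M) ->
  f b - f a - (M + e) * (b - a) <= e.
Proof.
move=> ab e0 Hc Hd; pose G u := f u - f a - (M + e) * (u - a).
pose S := [set s | a <= s <= b /\ forall u, a <= u <= s -> G u <= e].
have Sa : S a.
  split=> [|u /andP[au ua]]; first by rewrite lexx ab.
  have -> : u = a by apply/eqP; rewrite eq_le ua au.
  by rewrite /G !subrr mulr0 subr0 ltW.
have supS : has_sup S by split; [exists a | exists b => s [/andP[_ ->]]].
pose c := sup S.
have ac : a <= c := sup_upper_bound supS Sa.
have cb : c <= b by apply: ge_sup; [exists a | move=> s [/andP[_ ->]]].
have G_below_c u : a <= u < c -> G u <= e.
  move=> /andP[au uc]; have [s [_ Hs] us] := sup_adherent (ltac:(by rewrite subr_gt0) : 0 < c - u) supS.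
  by apply: Hs; rewrite au /=; move: us; rewrite /c; lra.
have Gc : G c <= e.
  have [ca|ac'] := eqVneq c a; first by case: Sa => _; apply; rewrite ca lexx.
  have {ac'} ac' : a < c by rewrite lt_neqAle eq_sym ac' ac.
  apply: (continuous_le_from_left ac') => [|u /andP[au uc]]; last first.
    by apply: G_below_c; rewrite ltW.
  apply: cvgB; first by apply: cvgB; [apply: Hc; rewrite ac' cb | exact: cvg_cst].
  by apply: cvgMl_tmp; apply: cvgB; [exact: cvg_id | exact: cvg_cst].
suff cb' : c = b by move: Gc; rewrite cb'.
apply/eqP; rewrite eq_le cb leNgt; apply/negP => cb'.
have [v Hv vM] := Hd c ltac:(by rewrite ac cb').
have [d d0 Hloc] := has_right_deriv_local_ub Hv (ltac:(lra) : v < M + e).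
pose d' := Num.min (d / 2) ((b - c) / 2).
have d'0 : 0 < d' by rewrite lt_min !divr_gt0 // subr_gt0.
have d'd : d' < d by rewrite gt_min ltr_pdivrMr // ltr_pMr // ltr1n.
have d'bc : d' < b - c by rewrite gt_min orbC ltr_pdivrMr ?subr_gt0 // ltr_pMr ?subr_gt0 // ltr1n.
have : S (c + d').
  split=> [|u /andP[au ucd]]; first by apply/andP; split; lra.
  have [uc|cu] := ltP u c; first by apply: G_below_c; rewrite au uc.
  have [->//|cu'] := eqVneq u c.
  have {cu'} cu : c < u by rewrite lt_neqAle eq_sym cu' cu.
  have := Hloc u ltac:(by apply/andP; split; lra).
  by move: Gc; rewrite /G; lra.
by move=> /(sup_upper_bound supS); rewrite -/c; lra.
Qed.

Lemma mean_value_le f a b M : a <= b ->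
  (forall t, a < t <= b -> {for t, continuous f}) ->
  (forall t, a <= t < b -> exists2 v, has_right_deriv f t v & v <= M) ->
  f b - f a <= M * (b - a).
Proof.
move=> ab Hc Hd; apply/ler_addgt0Pr => e e0.
have k0 : 0 < b - a + 1 by lra.
have := mean_value_le_eps ab (divr_gt0 e0 k0) Hc Hd.
have : e / (b - a + 1) * (b - a + 1) = e by rewrite mulfVK // gt_eqF.
nra.
Qed.

Lemma mean_value_ge f a b M : a <= b ->
  (forall t, a < t <= b -> {for t, continuous f}) ->
  (forall t, a <= t < b -> exists2 v, has_right_deriv f t v & M <= v) ->
  M * (b - a) <= f b - f a.
Proof.
move=> ab Hc Hd; suff : - f b - - f a <= - M * (b - a) by lra.
apply: (@mean_value_le (fun s => - f s)) => // [t /Hc/cvgN //|t /Hd[v Hv Mv]].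
by exists (- v); [apply: has_right_derivN | rewrite lerN2].
Qed.

Lemma right_deriv_lipschitz f a b L u w :
  (forall t, a < t <= b -> {for t, continuous f}) ->
  (forall t, a <= t < b -> exists2 v, has_right_deriv f t v & `|v| <= L) ->
  a <= u <= b -> a <= w <= b -> `|f u - f w| <= L * `|u - w|.
Proof.
move=> Hc Hd; wlog uw : u w / u <= w => [Hwlog hu hw|/andP[au ub] /andP[aw wb]].
  by have [/Hwlog|/ltW/Hwlog] := leP u w; [apply | rewrite distrC (distrC u); apply].
rewrite distrC (distrC u) [`|w - u|]ger0_norm ?subr_ge0 // ler_norml.
have Hc' t : u < t <= w -> {for t, continuous f}.
  by move=> /andP[? ?]; apply: Hc; apply/andP; split; lra.
have Hd' t : u <= t < w -> exists2 v, has_right_deriv f t v & `|v| <= L.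
  by move=> /andP[? ?]; apply: Hd; apply/andP; split; lra.
apply/andP; split.
  rewrite -mulNr; apply: mean_value_ge => // t /Hd'[v Hv /ler_normlP[]].
  by exists v => //; lra.
by apply: mean_value_le => // t /Hd'[v Hv /ler_normlP[]]; exists v.
Qed.

Lemma landau_interval g h h2 a d L eta t : 0 < d ->
  (forall u, a < u <= a + d -> {for u, continuous g} /\ {for u, continuous h}) ->
  (forall u, a <= u < a + d ->
     [/\ has_right_deriv g u (h u), has_right_deriv h u (h2 u) & `|h2 u| <= L]) ->
  (forall u, a <= u <= a + d -> `|g u| <= eta) ->
  a <= t <= a + d -> `|h t| <= 2 * eta / d + L * d.
Proof.
move=> d0 Hc Hd Hg tin.
have h_near_t u : a <= u <= a + d -> `|h u - h t| <= L * d.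
  move=> uin; apply: le_trans (right_deriv_lipschitz (L := L) _ _ uin tin) _.
  - by move=> s /Hc[].
  - by move=> s /Hd[_ ? ?]; exists (h2 s).
  have L0 : 0 <= L by have [_ _] := Hd a ltac:(by rewrite lexx ltrDl); apply: le_trans.
  by apply: ler_wpM2l => //; rewrite ler_norml; apply/andP; split; lra.
have ad : a <= a + d by rewrite lerDl ltW.
have Hgc u : a < u <= a + d -> {for u, continuous g} by move=> /Hc[].
have up : g (a + d) - g a <= (h t + L * d) * (a + d - a).
  apply: mean_value_le => // u /andP[au ud]; have [Hu _ _] := Hd u ltac:(by rewrite au).
  exists (h u) => //; have /ler_normlP[] := h_near_t u ltac:(by rewrite au ltW); lra.
have lo : (h t - L * d) * (a + d - a) <= g (a + d) - g a.
  apply: mean_value_ge => // u /andP[au ud]; have [Hu _ _] := Hd u ltac:(by rewrite au).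
  exists (h u) => //; have /ler_normlP[] := h_near_t u ltac:(by rewrite au ltW); lra.
have /ler_normlP[ga ga'] := Hg a ltac:(by rewrite lexx).
have /ler_normlP[gd gd'] := Hg (a + d) ltac:(by rewrite lexx ad).
have e : (2 * eta / d + L * d) * d = 2 * eta + L * d * d by rewrite mulrDl mulfVK ?gt_eqF.
move: up lo; rewrite addrAC subrr add0r => up lo.
by rewrite ler_norml; apply/andP; split; nra.
Qed.

End RealRightDerivative.

Section VectorNorms.
Variable R : realDomainType.

Definition vdot p (u v : 'cV[R]_p) : R := (u^T *m v) 0 0.

Definition norm1 p q (M : 'M[R]_(p, q)) : R := \sum_i \sum_j `|M i j|.

Lemma vdotE p (u v : 'cV[R]_p) : vdot u v = \sum_r u r 0 * v r 0.
Proof. by rewrite /vdot mxE; apply: eq_bigr => r _; rewrite mxE. Qed.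

Lemma vdotC p (u v : 'cV[R]_p) : vdot u v = vdot v u.
Proof. by rewrite !vdotE; apply: eq_bigr => r _; rewrite mulrC. Qed.

Lemma vdotDl p (u w v : 'cV[R]_p) : vdot (u + w) v = vdot u v + vdot w v.
Proof. by rewrite !vdotE -big_split; apply: eq_bigr => r _; rewrite mxE mulrDl. Qed.

Lemma vdotDr p (u w v : 'cV[R]_p) : vdot v (u + w) = vdot v u + vdot v w.
Proof. by rewrite vdotC vdotDl !(vdotC v). Qed.

Lemma vdotZl p c (u v : 'cV[R]_p) : vdot (c *: u) v = c * vdot u v.
Proof. by rewrite !vdotE mulr_sumr; apply: eq_bigr => r _; rewrite mxE mulrA. Qed.

Lemma vdotZr p c (u v : 'cV[R]_p) : vdot v (c *: u) = c * vdot v u.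
Proof. by rewrite vdotC vdotZl vdotC. Qed.

Lemma vdotBl p (u w v : 'cV[R]_p) : vdot (u - w) v = vdot u v - vdot w v.
Proof. by rewrite vdotDl -scaleN1r vdotZl mulN1r. Qed.

Lemma vdotBr p (u w v : 'cV[R]_p) : vdot v (u - w) = vdot v u - vdot v w.
Proof. by rewrite vdotC vdotBl !(vdotC v). Qed.

Lemma vdot_sumr p (I : Type) (r : seq I) (P : pred I) (F : I -> 'cV[R]_p) v :
  vdot v (\sum_(i <- r | P i) F i) = \sum_(i <- r | P i) vdot v (F i).
Proof.
by rewrite vdotE; under eq_bigr do rewrite summxE mulr_sumr; rewrite exchange_big; apply: eq_bigr => i _; rewrite vdotE.
Qed.

Lemma vdot_mulmxl p q (M : 'M[R]_(p, q)) (u : 'cV[R]_q) (v : 'cV[R]_p) :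
  vdot (M *m u) v = vdot u (M^T *m v).
Proof. by rewrite /vdot trmx_mul mulmxA. Qed.

Lemma vdot_sqr_coord p (v : 'cV[R]_p) r : v r 0 ^+ 2 <= vdot v v.
Proof.
rewrite vdotE (bigD1 r) //= expr2 lerDl.
by apply: sumr_ge0 => k _; rewrite -expr2 sqr_ge0.
Qed.

Lemma vdot_ge0 p (v : 'cV[R]_p) : 0 <= vdot v v.
Proof. by case: p v => [|p] v; [rewrite vdotE big_ord0 | apply: le_trans (vdot_sqr_coord v 0); rewrite sqr_ge0]. Qed.

Lemma qformE n (M : 'M[R]_n) v : qform M v = vdot v (M *m v).
Proof. by rewrite /qform /vdot mulmxA. Qed.

Lemma norm1_ge0 p q (M : 'M[R]_(p, q)) : 0 <= norm1 M.
Proof. by apply: sumr_ge0 => i _; apply: sumr_ge0. Qed.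

Lemma norm1_coord p q (M : 'M[R]_(p, q)) i j : `|M i j| <= norm1 M.
Proof.
rewrite /norm1 (bigD1 i) //= (bigD1 j) //= -addrA lerDl.
by apply: addr_ge0; apply: sumr_ge0 => // k _; apply: sumr_ge0.
Qed.

Lemma norm1_le p q (M : 'M[R]_(p, q)) b : (forall i j, `|M i j| <= b) ->
  norm1 M <= (p * q)%:R * b.
Proof.
move=> Mb; have -> : (p * q)%:R * b = \sum_(i < p) \sum_(j < q) b.
  by rewrite !sumr_const !card_ord -mulrnA mulr_natl mulnC.
by apply: ler_sum => i _; apply: ler_sum => j _.
Qed.

Lemma norm1D p q (M N : 'M[R]_(p, q)) : norm1 (M + N) <= norm1 M + norm1 N.
Proof.
rewrite /norm1 -big_split ler_sum // => i _; rewrite -big_split ler_sum // => j _.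
by rewrite mxE ler_normD.
Qed.

Lemma norm1Z p q c (M : 'M[R]_(p, q)) : norm1 (c *: M) = `|c| * norm1 M.
Proof.
rewrite /norm1 mulr_sumr; apply: eq_bigr => i _; rewrite mulr_sumr.
by apply: eq_bigr => j _; rewrite mxE normrM.
Qed.

Lemma norm1N p q (M : 'M[R]_(p, q)) : norm1 (- M) = norm1 M.
Proof. by rewrite -scaleN1r norm1Z normrN1 mul1r. Qed.

Lemma norm1B p q (M N : 'M[R]_(p, q)) : norm1 (M - N) <= norm1 M + norm1 N.
Proof. by rewrite -(norm1N N) norm1D. Qed.

Lemma norm1_sum p q (I : Type) (r : seq I) (P : pred I) (F : I -> 'M[R]_(p, q)) :
  norm1 (\sum_(i <- r | P i) F i) <= \sum_(i <- r | P i) norm1 (F i).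
Proof.
elim: r => [|i r IH]; first by rewrite !big_nil /norm1 big1 // => i _; rewrite big1 // => j _; rewrite mxE normr0.
by rewrite !big_cons; case: (P i) => //; apply: le_trans (norm1D _ _) _; rewrite lerD2l.
Qed.

Lemma norm1_mul p q s (M : 'M[R]_(p, q)) (N : 'M[R]_(q, s)) :
  norm1 (M *m N) <= norm1 M * norm1 N.
Proof.
rewrite /norm1 mulr_suml; apply: ler_sum => i _.
apply: (@le_trans _ _ (\sum_j \sum_k `|M i k| * `|N k j|)).
  apply: ler_sum => j _; rewrite mxE; apply: le_trans (ler_norm_sum _ _ _) _.
  by apply: ler_sum => k _; rewrite normrM.
rewrite exchange_big /= mulr_suml; apply: ler_sum => k _.
rewrite -mulr_sumr ler_wpM2l // (bigD1 k) //= lerDl.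
by apply: sumr_ge0 => k' _; apply: sumr_ge0.
Qed.

Lemma norm1_vdot p (u v : 'cV[R]_p) : `|vdot u v| <= norm1 u * norm1 v.
Proof.
have -> : norm1 u = norm1 u^T.
  by rewrite /norm1 exchange_big; apply: eq_bigr => i _; apply: eq_bigr => j _; rewrite mxE.
exact: le_trans (norm1_coord _ 0 0) (norm1_mul _ _).
Qed.

Lemma mx_norm_le_norm1 p q (M : 'M[R]_(p, q)) : `|M| <= norm1 M.
Proof.
by rewrite [`|M|]mx_normrE; apply: bigmax_le => [|ij _]; [apply: norm1_ge0 | apply: norm1_coord].
Qed.

End VectorNorms.

Lemma continuous_sum (R : realType) (V : normedModType R) (I : Type) (r : seq I)
    (P : pred I) (F : I -> R -> V) t :
  (forall i, P i -> {for t, continuous (F i)}) ->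
  {for t, continuous (fun s => \sum_(i <- r | P i) F i s)}.
Proof.
move=> HF; elim: r => [|i r IH].
  have -> : (fun s => \sum_(i <- [::] | P i) F i s) = fun=> 0.
    by apply/funext => s; rewrite big_nil.
  exact: cvg_cst.
have -> : (fun s => \sum_(j <- i :: r | P j) F j s) =
    fun s => (if P i then F i s else 0) + \sum_(j <- r | P j) F j s.
  by apply/funext => s; rewrite big_cons; case: (P i); rewrite ?add0r.
by apply: cvgD IH; case Pi: (P i); [apply: HF | apply: cvg_cst].
Qed.

Section CoordinateDerivatives.
Variable R : realType.
Implicit Types (t : R).

Definition coordwise_right_deriv p (u : R -> 'cV[R]_p) t (u' : 'cV[R]_p) :=
  forall r, has_right_deriv (fun s => u s r 0) t (u' r 0).

Definition coordwise_continuous p (u : R -> 'cV[R]_p) t :=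
  forall r, {for t, continuous (fun s => u s r 0)}.

Lemma has_right_deriv_coordwise p (u : R -> 'cV[R]_p) t v :
  has_right_deriv u t v -> coordwise_right_deriv u t v.
Proof.
move=> Hu r; have := cvg_comp _ _ Hu (@coord_continuous _ _ _ r 0 v).
by apply: cvg_trans; apply: near_eq_cvg; near=> h => /=; rewrite !mxE.
Unshelve. all: by end_near.
Qed.

Lemma continuous_coordwise p (u : R -> 'cV[R]_p) t :
  {for t, continuous u} -> coordwise_continuous u t.
Proof. by move=> Hu r; apply: (cvg_comp _ _ Hu (@coord_continuous _ _ _ r 0 (u t))). Qed.

Lemma coordwise_right_deriv_mulmx p q (M : 'M[R]_(q, p)) (u : R -> 'cV[R]_p) t u' :
  coordwise_right_deriv u t u' -> coordwise_right_deriv (fun s => M *m u s) t (M *m u').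
Proof.
move=> Hu r; rewrite mxE (_ : (fun s => (M *m u s) r 0) = fun s => \sum_k M r k * u s k 0).
  by apply: has_right_deriv_sum => k _; apply: has_right_derivMl.
by apply/funext => s; rewrite mxE.
Qed.

Lemma coordwise_right_derivD p (u w : R -> 'cV[R]_p) t u' w' :
  coordwise_right_deriv u t u' -> coordwise_right_deriv w t w' ->
  coordwise_right_deriv (fun s => u s + w s) t (u' + w').
Proof.
move=> Hu Hw r; rewrite mxE (_ : (fun s => (u s + w s) r 0) = fun s => u s r 0 + w s r 0).
  exact: has_right_derivD.
by apply/funext => s; rewrite mxE.
Qed.

Lemma coordwise_right_derivZ p c (u : R -> 'cV[R]_p) t u' :
  coordwise_right_deriv u t u' -> coordwise_right_deriv (fun s => c *: u s) t (c *: u').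
Proof.
move=> Hu r; rewrite mxE (_ : (fun s => (c *: u s) r 0) = fun s => c * u s r 0).
  exact: has_right_derivMl.
by apply/funext => s; rewrite mxE.
Qed.

Lemma coordwise_right_derivB p (u w : R -> 'cV[R]_p) t u' w' :
  coordwise_right_deriv u t u' -> coordwise_right_deriv w t w' ->
  coordwise_right_deriv (fun s => u s - w s) t (u' - w').
Proof.
move=> Hu Hw r; rewrite !mxE (_ : (fun s => (u s - w s) r 0) = fun s => u s r 0 - w s r 0).
  exact: has_right_derivB.
by apply/funext => s; rewrite !mxE.
Qed.

Lemma coordwise_right_deriv_sum p (I : Type) (r : seq I) (P : pred I)
    (F : I -> R -> 'cV[R]_p) (D : I -> 'cV[R]_p) t :
  (forall i, P i -> coordwise_right_deriv (F i) t (D i)) ->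
  coordwise_right_deriv (fun s => \sum_(i <- r | P i) F i s) t (\sum_(i <- r | P i) D i).
Proof.
move=> HF k; rewrite summxE.
rewrite (_ : (fun s => (\sum_(i <- r | P i) F i s) k 0) = fun s => \sum_(i <- r | P i) F i s k 0).
  by apply: has_right_deriv_sum => i Pi; apply: HF.
by apply/funext => s; rewrite summxE.
Qed.

Lemma has_right_deriv_vdot p (u w : R -> 'cV[R]_p) t u' w' :
  coordwise_right_deriv u t u' -> coordwise_right_deriv w t w' ->
  has_right_deriv (fun s => vdot (u s) (w s)) t (vdot u' (w t) + vdot (u t) w').
Proof.
move=> Hu Hw; rewrite !vdotE -big_split.
rewrite (_ : (fun s => vdot (u s) (w s)) = fun s => \sum_r u s r 0 * w s r 0).
  by apply: has_right_deriv_sum => r _; apply: has_right_derivM.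
by apply/funext => s; rewrite vdotE.
Qed.

Lemma coordwise_continuous_mulmx p q (M : 'M[R]_(q, p)) (u : R -> 'cV[R]_p) t :
  coordwise_continuous u t -> coordwise_continuous (fun s => M *m u s) t.
Proof.
move=> Hu r; rewrite (_ : (fun s => (M *m u s) r 0) = fun s => \sum_k M r k * u s k 0).
  by apply: continuous_sum => k _; apply: cvgMl_tmp; apply: Hu.
by apply/funext => s; rewrite mxE.
Qed.

Lemma coordwise_continuousD p (u w : R -> 'cV[R]_p) t :
  coordwise_continuous u t -> coordwise_continuous w t -> coordwise_continuous (fun s => u s + w s) t.
Proof.
move=> Hu Hw r; rewrite (_ : (fun s => (u s + w s) r 0) = fun s => u s r 0 + w s r 0).
  by apply: cvgD; [apply: Hu | apply: Hw].
by apply/funext => s; rewrite mxE.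
Qed.

Lemma coordwise_continuousZ p c (u : R -> 'cV[R]_p) t :
  coordwise_continuous u t -> coordwise_continuous (fun s => c *: u s) t.
Proof.
move=> Hu r; rewrite (_ : (fun s => (c *: u s) r 0) = fun s => c * u s r 0).
  by apply: cvgMl_tmp; apply: Hu.
by apply/funext => s; rewrite mxE.
Qed.

Lemma coordwise_continuousB p (u w : R -> 'cV[R]_p) t :
  coordwise_continuous u t -> coordwise_continuous w t -> coordwise_continuous (fun s => u s - w s) t.
Proof.
move=> Hu Hw r; rewrite (_ : (fun s => (u s - w s) r 0) = fun s => u s r 0 - w s r 0).
  by apply: cvgB; [apply: Hu | apply: Hw].
by apply/funext => s; rewrite !mxE.
Qed.

Lemma coordwise_continuous_sum p (I : Type) (r : seq I) (P : pred I) (F : I -> R -> 'cV[R]_p) t :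
  (forall i, P i -> coordwise_continuous (F i) t) ->
  coordwise_continuous (fun s => \sum_(i <- r | P i) F i s) t.
Proof.
move=> HF k; rewrite (_ : (fun s => (\sum_(i <- r | P i) F i s) k 0) = fun s => \sum_(i <- r | P i) F i s k 0).
  by apply: continuous_sum => i Pi; apply: HF.
by apply/funext => s; rewrite summxE.
Qed.

Lemma continuous_vdot p (u w : R -> 'cV[R]_p) t :
  coordwise_continuous u t -> coordwise_continuous w t ->
  {for t, continuous (fun s => vdot (u s) (w s))}.
Proof.
move=> Hu Hw; rewrite (_ : (fun s => vdot (u s) (w s)) = fun s => \sum_r u s r 0 * w s r 0).
  by apply: continuous_sum => r _; apply: cvgM; [apply: Hu | apply: Hw].
by apply/funext => s; rewrite vdotE.
Qed.

Lemma has_right_deriv_qform p (M : 'M[R]_p) (y : R -> 'cV[R]_p) t y' : M^T = M ->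
  coordwise_right_deriv y t y' ->
  has_right_deriv (fun s => qform M (y s)) t (2 * vdot (y t) (M *m y')).
Proof.
move=> MT Hy; rewrite (_ : (fun s => qform M (y s)) = fun s => vdot (y s) (M *m y s)).
  have := has_right_deriv_vdot Hy (coordwise_right_deriv_mulmx (M := M) Hy).
  by rewrite vdotC vdot_mulmxl MT mulr2n mulrDl mul1r.
by apply/funext => s; rewrite qformE.
Qed.

Lemma continuous_qform p (M : 'M[R]_p) (y : R -> 'cV[R]_p) t :
  coordwise_continuous y t -> {for t, continuous (fun s => qform M (y s))}.
Proof.
move=> Hy; rewrite (_ : (fun s => qform M (y s)) = fun s => vdot (y s) (M *m y s)).
  by apply: continuous_vdot => //; apply: coordwise_continuous_mulmx.
by apply/funext => s; rewrite qformE.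
Qed.

End CoordinateDerivatives.

Section PositiveDefinite.
Variables (R : rcfType) (n : nat) (P : 'M[R]_n).
Hypothesis P_posdef : sym_posdef P.

Lemma posdef_qform_ge0 v : 0 <= qform P v.
Proof.
have [->|v0] := eqVneq v 0; last by apply: ltW; case: P_posdef => _; apply.
by rewrite /qform mulmx0 mxE.
Qed.

Lemma posdef_unitmx : P \in unitmx.
Proof.
rewrite unitmxE unitfE; apply/negP => /det0P [v v0 vP].
have : 0 < qform P v^T by case: P_posdef => _; apply; rewrite trmx_eq0.
by rewrite /qform trmxK vP mul0mx mxE ltxx.
Qed.

Lemma posdef_cauchy_schwarz r v : ((P *m v) r 0) ^+ 2 <= P r r * qform P v.
Proof.
set e : 'cV[R]_n := delta_mx r 0; set z := (P *m v) r 0.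
have e0 : e != 0.
  by apply/eqP => /matrixP /(_ r 0); rewrite !mxE !eqxx => /eqP; rewrite oner_eq0.
have vdot_e u : vdot e u = u r 0.
  rewrite vdotE (bigD1 r) //= big1 => [|k kr]; first by rewrite !mxE !eqxx mul1r addr0.
  by rewrite !mxE (negbTE kr) mul0r.
have Pe : (P *m e) r 0 = P r r by rewrite -colE mxE.
have Prr0 : 0 < P r r by rewrite -Pe -vdot_e -qformE; case: P_posdef => _; apply.
have expand s : qform P (s *: e + v) = s ^+ 2 * P r r + 2 * s * z + qform P v.
  rewrite !qformE mulmxDr -scalemxAr !vdotDl !vdotDr !vdotZl !vdotZr !vdot_e Pe.
  have -> : vdot v (P *m e) = z by rewrite vdotC vdot_mulmxl; case: P_posdef => -> _; rewrite vdot_e.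
  by rewrite -/z; ring.
have := posdef_qform_ge0 ((- z / P r r) *: e + v); rewrite expand.
have : (- z / P r r) * P r r = - z by rewrite mulfVK ?gt_eqF.
have := posdef_qform_ge0 v; nra.
Qed.

Lemma qform_coercive : exists2 c, 0 <= c & forall v, norm1 v ^+ 2 <= c * qform P v.
Proof.
set pm := \sum_r `|P r r|; set cP := norm1 (invmx P) * n%:R.
have pm0 : 0 <= pm by apply: sumr_ge0.
have cP0 : 0 <= cP by rewrite mulr_ge0 ?norm1_ge0.
exists (cP ^+ 2 * pm) => [|v]; first by rewrite mulr_ge0 ?exprn_ge0.
have q0 := posdef_qform_ge0 v; set s := Num.sqrt (pm * qform P v).
have coord_le r : `|(P *m v) r 0| <= s.
  rewrite -sqrtr_sqr; apply: ler_wsqrtr; apply: le_trans (posdef_cauchy_schwarz r v) _.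
  apply: ler_wpM2r => //; apply: le_trans (ler_norm _) _.
  by rewrite /pm (bigD1 r) //= lerDl; apply: sumr_ge0.
have : norm1 v <= cP * s.
  rewrite -[v](mulKmx posdef_unitmx) /cP -mulrA.
  apply: le_trans (norm1_mul _ _) _; apply: ler_wpM2l; first exact: norm1_ge0.
  by rewrite -[n in n%:R]muln1; apply: norm1_le => r j; rewrite [j]ord1.
have s0 : 0 <= s := sqrtr_ge0 _.
move=> /(fun h => ler_pM (norm1_ge0 v) (norm1_ge0 v) h h).
by rewrite -!expr2 exprMn sqr_sqrtr ?mulr_ge0 // mulrA.
Qed.

Lemma qform_le_norm1 v : qform P v <= norm1 P * norm1 v ^+ 2.
Proof.
rewrite qformE; apply: le_trans (ler_norm _) _; apply: le_trans (norm1_vdot _ _) _.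
rewrite mulrC expr2 mulrA; apply: ler_wpM2r; first exact: norm1_ge0.
exact: norm1_mul.
Qed.

End PositiveDefinite.

Lemma laplacian_vdot (R : realDomainType) (N p : nat) (w : 'M[R]_N) (y : 'I_N -> 'cV[R]_p) :
  (forall i j, w i j = w j i) ->
  2 * \sum_i vdot (y i) (\sum_j w i j *: (y j - y i)) =
  - \sum_i \sum_j w i j * vdot (y i - y j) (y i - y j).
Proof.
move=> wsym; have E1 : \sum_i vdot (y i) (\sum_j w i j *: (y j - y i)) =
    \sum_i \sum_j w i j * vdot (y i) (y j - y i).
  by apply: eq_bigr => i _; rewrite vdot_sumr; apply: eq_bigr => j _; rewrite vdotZr.
have E2 : \sum_i \sum_j w i j * vdot (y i) (y j - y i) =
    \sum_i \sum_j w i j * vdot (y j) (y i - y j).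
  by rewrite exchange_big /=; apply: eq_bigr => i _; apply: eq_bigr => j _; rewrite wsym.
rewrite E1 mulr2n mulrDl mul1r {2}E2 -big_split -sumrN /=; apply: eq_bigr => i _.
rewrite -big_split -sumrN; apply: eq_bigr => j _ /=.
by rewrite !vdotBl !vdotBr (vdotC (y j) (y i)); ring.
Qed.

Lemma clos_trans_norm_le (R : numDomainType) (V : normedZmodType R) (N : nat)
    (E : 'I_N -> 'I_N -> Prop) (y : 'I_N -> V) (b : R) r i :
  0 <= b -> (forall w z, E w z -> `|y w - y z| <= b) -> clos_trans _ E r i ->
  `|y r - y i| <= (N.-1)%:R * b.
Proof.
move=> b0 Eb Hri; pose e := [rel w z : 'I_N | `[< E w z >]].
have /connectP[q eq ->] : connect e r i.
  elim: Hri => [w z Ewz | w z u _ H1 _ H2]; last exact: connect_trans H1 H2.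
  by apply: connect1; apply/asboolP.
case: (shortenP eq) => q' eq' uq' _.
have size_q' : (size q' <= N.-1)%N.
  have := @uniq_leq_size _ (r :: q') (enum 'I_N) uq'.
  by rewrite size_enum_ord /= => /(_ (fun z _ => mem_enum _ z)); lia.
have path_le w s : path e w s -> `|y w - y (last w s)| <= (size s)%:R * b.
  elim: s w => [|z s IH] w /=; first by rewrite subrr normr0 mul0r.
  move=> /andP[/asboolP/Eb ewz /IH zs].
  rewrite -(subrKA (y z)) -natr1 mulrDl mul1r addrC.
  by apply: le_trans (ler_normD _ _) _; apply: lerD.
by apply: le_trans (path_le r q' eq') _; apply: ler_wpM2r => //; rewrite ler_nat.
Qed.

Lemma finite_pos_lower_bound (R : realDomainType) (T : finType) (w : T -> R) :
  exists2 c, 0 < c & forall z, 0 < w z -> c <= w z.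
Proof.
exists (\big[Order.min/1]_(z | 0 < w z) w z); first exact: lt_bigmin.
by move=> z wz; apply: bigmin_le_cond.
Qed.

Lemma dwell_seq_cover (R : realType) (s : nat -> R) (Tmin t : R) :
  0 < Tmin -> s 0%N = 0 -> (forall k, s k + Tmin <= s k.+1) -> 0 <= t ->
  exists k, s k <= t < s k.+1.
Proof.
move=> Tm0 s0 sinc t0.
have s_ge k : k%:R * Tmin <= s k.
  elim: k => [|k IH]; first by rewrite mul0r s0.
  by rewrite -natr1 mulrDl mul1r; apply: le_trans (sinc k); rewrite lerD2r.
suff cover p : t < s p -> exists k, s k <= t < s k.+1.
  apply: (cover (Num.Def.archi_bound (t / Tmin))); apply: lt_le_trans (s_ge _).
  by rewrite -ltr_pdivrMr //; apply: archi_boundP; rewrite divr_ge0 // ltW.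
elim: p => [|p IH]; first by rewrite s0 ltNge t0.
by move=> tp; have [sp|/IH//] := leP (s p) t; exists p; rewrite sp tp.
Qed.

Lemma dwell_interval (R : realType) (Q : nat) (sigma : R -> 'I_Q) (Tmin t d : R) :
  dwell_switching sigma Tmin -> 0 <= t -> 0 < d -> 2 * d <= Tmin ->
  exists a, [/\ 0 <= a, t - d <= a <= t & forall u, a <= u <= a + d -> sigma u = sigma t].
Proof.
move=> [Tm0 [s [s0 [sinc sconst]]]] t0 d0 dT.
have [k /andP[skt tsk]] := dwell_seq_cover Tm0 s0 sinc t0.
have sk0 : 0 <= s k.
  by elim: k {skt tsk} => [|k IH]; [rewrite s0 | apply: le_trans (sinc k); lra].
have st : sigma t = sigma (s k) by apply: sconst; rewrite skt tsk.
have [tdsk|sktd] := ltP (t + d) (s k.+1).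
  exists t; split; [by [] | by apply/andP; split; lra | ].
  by move=> u /andP[tu ud]; rewrite st; apply: sconst; apply/andP; split; lra.
have := sinc k; exists (t - d); split; [lra | apply/andP; split; lra | ].
by move=> u /andP[tu ud]; rewrite st; apply: sconst; apply/andP; split; lra.
Qed.

Lemma near_pinftyP (R : realType) (P : R -> Prop) :
  (\forall t \near +oo, P t) <-> exists2 T0, 0 <= T0 & forall t, T0 <= t -> P t.
Proof.
split=> [[M [Mr HM]]|[T0 T00 HT]].
  exists (Num.max 0 (M + 1)) => [|t]; first by rewrite le_max lexx.
  by rewrite ge_max => /andP[_ Mt]; apply: HM; lra.
by exists T0; split=> [|t /ltW]; [rewrite ger0_real | apply: HT].
Qed.

Lemma mul_div_succ_le (R : realFieldType) (c y : R) :
  0 <= c -> 0 <= y -> c * (y / (c + 1)) <= y.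
Proof.
move=> c0 y0; rewrite mulrA ler_pdivrMr ?ltr_wpDl //.
by rewrite mulrDr mulr1 mulrC lerDl.
Qed.

Section SwitchedNetwork.
Variables (R : realType) (N n m Q : nat) (a : 'I_Q -> 'M[R]_N) (sigma : R -> 'I_Q)
  (Tmin phi : R) (A : 'M[R]_n) (B : 'M[R]_(n, m)) (P : 'M[R]_n)
  (x : 'I_N -> R -> 'cV[R]_n).
Hypotheses (a_undirected : forall k, undirected_weights (a k))
  (sigma_dwell : dwell_switching sigma Tmin)
  (P_posdef : sym_posdef P) (AP_negsemidef : neg_semidef (A^T *m P + P *m A))
  (phi_gt0 : 0 < phi) (x_solution : network_solution A B (B^T *m P) phi a sigma x).

Local Notation K := (B^T *m P).

Definition vfield k (y : 'I_N -> 'cV[R]_n) i :=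
  A *m y i + phi *: (B *m K *m \sum_(j < N) a k i j *: (y j - y i)).

Definition xdot i t := vfield (sigma t) (x^~ t) i.

Definition coupling i t := \sum_(l < N) a (sigma t) i l *: (K *m (x l t - x i t)).

Lemma xdot_coupling i t : xdot i t = A *m x i t + phi *: (B *m coupling i t).
Proof.
rewrite /xdot /vfield /coupling -mulmxA mulmx_sumr.
by congr (_ + _ *: (_ *m _)); apply: eq_bigr => l _; rewrite scalemxAr.
Qed.

Lemma xdot_right_deriv i t : 0 <= t -> coordwise_right_deriv (x i) t (xdot i t).
Proof. by move=> t0; apply: has_right_deriv_coordwise; have [_] := x_solution i; apply. Qed.

Lemma x_continuous i t : 0 < t -> coordwise_continuous (x i) t.
Proof. by move=> t0; apply: continuous_coordwise; have [+ _] := x_solution i; apply. Qed.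

Lemma vfield_right_deriv k (y : 'I_N -> R -> 'cV[R]_n) y' t i :
  (forall l, coordwise_right_deriv (y l) t (y' l)) ->
  coordwise_right_deriv (fun s => vfield k (y^~ s) i) t (vfield k y' i).
Proof.
move=> Hy; apply: coordwise_right_derivD; first exact: coordwise_right_deriv_mulmx.
apply: coordwise_right_derivZ; apply: coordwise_right_deriv_mulmx.
by apply: coordwise_right_deriv_sum => j _; apply: coordwise_right_derivZ; apply: coordwise_right_derivB.
Qed.

Lemma vfield_continuous k (y : 'I_N -> R -> 'cV[R]_n) t i :
  (forall l, coordwise_continuous (y l) t) ->
  coordwise_continuous (fun s => vfield k (y^~ s) i) t.
Proof.
move=> Hy; apply: coordwise_continuousD; first exact: coordwise_continuous_mulmx.
apply: coordwise_continuousZ; apply: coordwise_continuous_mulmx.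
by apply: coordwise_continuous_sum => j _; apply: coordwise_continuousZ; apply: coordwise_continuousB.
Qed.

Lemma weight_ge0 k i j : 0 <= a k i j.
Proof. by have [_ []] := a_undirected k. Qed.

Lemma weight_sym k i j : a k i j = a k j i.
Proof. by have [] := a_undirected k. Qed.

Definition wtot := \sum_k \sum_i \sum_j a k i j.

Lemma wtot_ge0 : 0 <= wtot.
Proof. by do 3 (apply: sumr_ge0 => ? _); apply: weight_ge0. Qed.

Lemma weight_sum_le k : \sum_i \sum_j a k i j <= wtot.
Proof.
rewrite /wtot (bigD1 k) //= lerDl.
by do 3 (apply: sumr_ge0 => ? _); apply: weight_ge0.
Qed.

Lemma row_weight_le k i : \sum_j a k i j <= wtot.
Proof.
apply: le_trans _ (weight_sum_le k); rewrite [leRHS](bigD1 i) //= lerDl.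
by do 2 (apply: sumr_ge0 => ? _); apply: weight_ge0.
Qed.

Lemma norm1_weighted_sum_le k i p (v : 'I_N -> 'cV[R]_p) C : 0 <= C ->
  (forall l, 0 < a k i l -> norm1 (v l) <= C) ->
  norm1 (\sum_l a k i l *: v l) <= wtot * C.
Proof.
move=> C0 Hv; apply: le_trans (norm1_sum _ _ _) _.
apply: (@le_trans _ _ (\sum_l a k i l * C)); last first.
  by rewrite -mulr_suml ler_wpM2r // row_weight_le.
apply: ler_sum => l _; rewrite norm1Z ger0_norm ?weight_ge0 //.
have [ail|] := boolP (0 < a k i l); first by rewrite ler_wpM2l ?weight_ge0 ?Hv.
by rewrite lt_def weight_ge0 andbT negbK => /eqP ->; rewrite !mul0r.
Qed.

Lemma weighted_double_sum_le k (z : 'I_N -> 'I_N -> R) C : 0 <= C ->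
  (forall i j, `|z i j| <= C) -> `|\sum_i \sum_j a k i j * z i j| <= wtot * C.
Proof.
move=> C0 Hz; apply: le_trans (ler_norm_sum _ _ _) _.
apply: (@le_trans _ _ (\sum_i \sum_j a k i j * C)); last first.
  by under eq_bigr do rewrite -mulr_suml; rewrite -mulr_suml ler_wpM2r // weight_sum_le.
apply: ler_sum => i _; apply: le_trans (ler_norm_sum _ _ _) _.
by apply: ler_sum => j _; rewrite normrM ger0_norm ?weight_ge0 // ler_wpM2l ?weight_ge0.
Qed.

Lemma vfield_linear_growth : exists2 c, 0 <= c & forall k y C i,
  (forall l, norm1 (y l) <= C) -> norm1 (vfield k y i) <= c * C.
Proof.
have wtot0 := wtot_ge0.
exists (norm1 A + phi * norm1 (B *m K) * (wtot * 2)) => [|k y C i Hy].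
  by rewrite addr_ge0 ?norm1_ge0 // !mulr_ge0 ?norm1_ge0 // ltW.
have C0 : 0 <= C := le_trans (norm1_ge0 _) (Hy i).
rewrite mulrDl; apply: le_trans (norm1D _ _) _; apply: lerD.
  by apply: le_trans (norm1_mul _ _) _; apply: ler_wpM2l; [apply: norm1_ge0 | apply: Hy].
rewrite norm1Z (ger0_norm (ltW phi_gt0)) -!mulrA; apply: ler_wpM2l; first exact: ltW.
apply: le_trans (norm1_mul _ _) _; apply: ler_wpM2l; first exact: norm1_ge0.
apply: norm1_weighted_sum_le => [|l _]; first by rewrite mulr_ge0.
by apply: le_trans (norm1B _ _) _; have := Hy l; have := Hy i; lra.
Qed.

Lemma P_sym : P^T = P.
Proof. by case: P_posdef. Qed.

Lemma vdot_P_field v w :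
  2 * vdot v (P *m (A *m v + phi *: (B *m w))) =
  qform (A^T *m P + P *m A) v + 2 * phi * vdot (K *m v) w.
Proof.
rewrite qformE mulmxDl mulmxDr !vdotDr -scalemxAr vdotZr.
have -> : vdot v (A^T *m P *m v) = vdot v (P *m (A *m v)).
  by rewrite -mulmxA -vdot_mulmxl vdotC vdot_mulmxl P_sym.
have -> : vdot v (P *m (B *m w)) = vdot (K *m v) w.
  by rewrite vdot_mulmxl trmx_mul trmxK P_sym !mulmxA.
by rewrite mulmxA; ring.
Qed.

Definition lyap t := \sum_i qform P (x i t).

Definition disagreement k t :=
  \sum_i \sum_j a k i j * vdot (K *m (x i t - x j t)) (K *m (x i t - x j t)).

Lemma lyap_ge0 t : 0 <= lyap t.
Proof. by apply: sumr_ge0 => i _; apply: posdef_qform_ge0. Qed.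

Lemma disagreement_ge_term k t i j :
  a k i j * vdot (K *m (x i t - x j t)) (K *m (x i t - x j t)) <= disagreement k t.
Proof.
rewrite /disagreement (bigD1 i) //= (bigD1 j) //= -addrA lerDl.
by apply: addr_ge0; do ?[apply: sumr_ge0 => ? _]; rewrite mulr_ge0 ?weight_ge0 ?vdot_ge0.
Qed.

Lemma disagreement_ge0 k t : 0 <= disagreement k t.
Proof. by do 2 (apply: sumr_ge0 => ? _); rewrite mulr_ge0 ?weight_ge0 ?vdot_ge0. Qed.

Lemma lyap_right_deriv t : 0 <= t ->
  exists2 v, has_right_deriv lyap t v & v <= - phi * disagreement (sigma t) t.
Proof.
move=> t0; exists (\sum_i 2 * vdot (x i t) (P *m xdot i t)).
  by apply: has_right_deriv_sum => i _; apply: has_right_deriv_qform P_sym (xdot_right_deriv (i := i) t0).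
under eq_bigr do rewrite xdot_coupling vdot_P_field.
rewrite big_split /= -mulr_sumr.
have -> : \sum_i vdot (K *m x i t) (coupling i t) =
    \sum_i vdot (K *m x i t) (\sum_l a (sigma t) i l *: (K *m x l t - K *m x i t)).
  by apply: eq_bigr => i _; congr vdot; apply: eq_bigr => l _; rewrite mulmxBr.
have lap := laplacian_vdot (w := a (sigma t)) (fun i => K *m x i t) (weight_sym _).
rewrite (_ : \sum_i \sum_j _ = disagreement (sigma t) t) /= in lap; last first.
  by apply: eq_bigr => i _; apply: eq_bigr => j _; rewrite !mulmxBr.
have quad : \sum_i qform (A^T *m P + P *m A) (x i t) <= 0.
  by apply: sumr_le0 => i _; apply: AP_negsemidef.
by rewrite [2 * phi]mulrC -mulrA lap; lra.
Qed.

Lemma lyap_continuous t : 0 < t -> {for t, continuous lyap}.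
Proof. by move=> t0; apply: continuous_sum => i _; apply: continuous_qform; apply: x_continuous. Qed.

Lemma lyap_drop s d c : 0 <= s -> 0 <= d ->
  (forall u, s <= u < s + d -> c <= disagreement (sigma u) u) ->
  lyap (s + d) <= lyap s - phi * c * d.
Proof.
move=> s0 d0 Hc; suff : lyap (s + d) - lyap s <= - phi * c * (s + d - s).
  by rewrite addrAC subrr add0r mulNr mulNr; lra.
apply: mean_value_le => [|u /andP[su _]|u /andP[su ud]]; first lra.
  by apply: lyap_continuous; lra.
have [v Hv vW] := lyap_right_deriv (ltac:(lra) : 0 <= u); exists v => //.
by apply: le_trans vW _; rewrite !mulNr lerN2 ler_wpM2l ?Hc ?su // ltW.
Qed.

Lemma lyap_nonincreasing s t : 0 <= s -> s <= t -> lyap t <= lyap s.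
Proof.
move=> s0 st; have := @lyap_drop s (t - s) 0 s0; rewrite subr_ge0 subrKC mulr0 mul0r subr0.
by apply=> // u _; apply: disagreement_ge0.
Qed.

Lemma state_bounded : exists2 C, 0 <= C & forall i t, 0 <= t -> norm1 (x i t) <= C.
Proof.
have [c c0 Hc] := qform_coercive P_posdef.
exists (Num.sqrt (c * lyap 0)) => [|i t t0]; first exact: sqrtr_ge0.
rewrite -[norm1 _]ger0_norm ?norm1_ge0 // -sqrtr_sqr; apply: ler_wsqrtr.
apply: le_trans (Hc _) _; apply: ler_wpM2l => //.
apply: le_trans (lyap_nonincreasing (lexx 0) t0).
rewrite /lyap (bigD1 i) //= lerDl.
by apply: sumr_ge0 => l _; apply: posdef_qform_ge0.
Qed.

Lemma xdot_bounded : exists2 C, 0 <= C & forall i t, 0 <= t -> norm1 (xdot i t) <= C.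
Proof.
have [Cx Cx0 Hx] := state_bounded; have [c c0 Hc] := vfield_linear_growth.
by exists (c * Cx) => [|i t t0]; [apply: mulr_ge0 | apply: Hc => l; apply: Hx].
Qed.

Lemma xddot_bounded : exists2 C, 0 <= C &
  forall k i t, 0 <= t -> norm1 (vfield k (xdot^~ t) i) <= C.
Proof.
have [Cf Cf0 Hf] := xdot_bounded; have [c c0 Hc] := vfield_linear_growth.
by exists (c * Cf) => [|k i t t0]; [apply: mulr_ge0 | apply: Hc => l; apply: Hf].
Qed.

Lemma norm1_vdot_K (u v : 'cV[R]_n) Cu Cv : norm1 u <= Cu -> norm1 v <= Cv ->
  `|vdot (K *m u) (K *m v)| <= (norm1 K * Cu) * (norm1 K * Cv).
Proof.
move=> hu hv; apply: le_trans (norm1_vdot _ _) _.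
by apply: ler_pM; rewrite ?norm1_ge0 //; apply: le_trans (norm1_mul _ _) _;
  apply: ler_wpM2l; rewrite ?norm1_ge0.
Qed.

Lemma disagreement_right_deriv_bounded : exists2 L, 0 <= L &
  forall k t, 0 <= t -> exists2 v, has_right_deriv (disagreement k) t v & `|v| <= L.
Proof.
have [Cx Cx0 Hx] := state_bounded; have [Cf Cf0 Hf] := xdot_bounded.
exists (wtot * ((norm1 K * (Cf + Cf)) * (norm1 K * (Cx + Cx)) *+ 2)) => [|k t t0].
  by rewrite mulr_ge0 ?wtot_ge0 // mulrn_wge0 // mulr_ge0 // mulr_ge0 ?norm1_ge0 ?addr_ge0.
have dx i j := coordwise_right_deriv_mulmx (M := K)
  (coordwise_right_derivB (xdot_right_deriv (i := i) t0) (xdot_right_deriv (i := j) t0)).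
eexists.
  apply: has_right_deriv_sum => i _; apply: has_right_deriv_sum => j _.
  exact: has_right_derivMl (has_right_deriv_vdot (dx i j) (dx i j)).
apply: weighted_double_sum_le => [|i j].
  by rewrite mulrn_wge0 // mulr_ge0 // mulr_ge0 ?norm1_ge0 ?addr_ge0.
have bx : norm1 (x i t - x j t) <= Cx + Cx by apply: le_trans (norm1B _ _) _; rewrite lerD ?Hx.
have bf : norm1 (xdot i t - xdot j t) <= Cf + Cf by apply: le_trans (norm1B _ _) _; rewrite lerD ?Hf.
apply: le_trans (ler_normD _ _) _; rewrite mulr2n lerD //; first exact: norm1_vdot_K.
by rewrite mulrC; apply: norm1_vdot_K.
Qed.

Lemma disagreement_continuous k t : 0 < t -> {for t, continuous (disagreement k)}.
Proof.
move=> t0; have cx i j := coordwise_continuous_mulmx (M := K)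
  (coordwise_continuousB (x_continuous (i := i) t0) (x_continuous (i := j) t0)).
apply: continuous_sum => i _; apply: continuous_sum => j _.
by apply: cvgMl_tmp; apply: continuous_vdot.
Qed.

Lemma disagreement_lipschitz : exists2 L, 0 <= L & forall k u w, 0 <= u -> 0 <= w ->
  `|disagreement k u - disagreement k w| <= L * `|u - w|.
Proof.
have [L L0 HL] := disagreement_right_deriv_bounded.
exists L => // k u w u0 w0.
apply: (right_deriv_lipschitz (a := 0) (b := Num.max u w)).
- by move=> t /andP[t0 _]; apply: disagreement_continuous.
- by move=> t /andP[t0 _]; apply: HL.
- by rewrite u0 le_max lexx.
- by rewrite w0 le_max lexx orbT.
Qed.

Lemma Tmin_gt0 : 0 < Tmin.
Proof. by case: sigma_dwell. Qed.

Lemma dwell_step_exists (c : R) : 0 < c -> exists2 d, 0 < d & 2 * d <= Tmin /\ d <= c.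
Proof.
move=> c0; exists (Num.min (Tmin / 2) c); first by rewrite lt_min c0 divr_gt0 ?Tmin_gt0.
have m1 : Num.min (Tmin / 2) c <= Tmin / 2 by rewrite ge_min lexx.
have m2 : Num.min (Tmin / 2) c <= c by rewrite ge_min lexx orbT.
by split; lra.
Qed.

Lemma lyap_drop_at_large_disagreement e : 0 < e ->
  exists2 d, 0 < d & forall t, 0 <= t -> e < disagreement (sigma t) t ->
    exists s, [/\ 0 <= s, t - d <= s & lyap (s + d) <= lyap s - phi * (e / 2) * d].
Proof.
move=> e0; have [L L0 HL] := disagreement_lipschitz.
have e20 : 0 < e / 2 by rewrite divr_gt0.
have [d d0 [dT dL]] := dwell_step_exists (divr_gt0 e20 (ltr_wpDl L0 ltr01)).
have Ld : L * d <= e / 2.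
  by apply: le_trans (mul_div_succ_le L0 (ltW e20)); rewrite ler_wpM2l.
exists d => // t t0 et; have [s [s0 /andP[ts st] sk]] := dwell_interval sigma_dwell t0 d0 dT.
exists s; split => //; apply: lyap_drop => // [|u /andP[su ud]]; first exact: ltW.
rewrite sk ?su ?ltW //.
have := HL (sigma t) u t (ltac:(lra)) t0; rewrite ler_norml => /andP[Hlo _].
have : L * `|u - t| <= L * d by rewrite ler_wpM2l // ler_norml; apply/andP; split; lra.
lra.
Qed.

Lemma disagreement_vanishes e : 0 < e ->
  \forall t \near +oo, disagreement (sigma t) t <= e.
Proof.
move=> e0; have [d d0 drop] := lyap_drop_at_large_disagreement e0.
apply/near_pinftyP; apply: contrapT => never.
have bad T0 : 0 <= T0 -> exists2 t, T0 <= t & e < disagreement (sigma t) t.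
  move=> T00; apply: contrapT => none; apply: never; exists T0 => // t T0t.
  by rewrite leNgt; apply/negP => et; apply: none; exists t.
set D := phi * (e / 2) * d.
have D0 : 0 < D by rewrite !mulr_gt0.
have descent p : exists2 t, 0 <= t & lyap t <= lyap 0 - p%:R * D.
  elim: p => [|p [t t0 Ht]]; first by exists 0; rewrite ?mul0r ?subr0.
  have [t' tt' et'] := bad (t + d) (ltac:(lra)).
  have [s [s0 t's Hs]] := drop t' (ltac:(lra)) et'.
  rewrite -/D in Hs.
  exists (s + d); first lra.
  have := lyap_nonincreasing t0 (ltac:(lra) : t <= s).
  by rewrite -natr1 mulrDl mul1r; lra.
have [p Dp] : exists p : nat, lyap 0 < p%:R * D.
  exists (Num.Def.archi_bound (lyap 0 / D)); rewrite -ltr_pdivrMr //.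
  by apply: archi_boundP; rewrite divr_ge0 ?lyap_ge0 ?ltW.
have [t t0 Ht] := descent p; have := lyap_ge0 t; lra.
Qed.

Definition edge_output p i j t := K *m A ^+ p *m (x i t - x j t).

Definition outputs_small p e t :=
  forall i j, 0 < a (sigma t) i j -> forall r, `|edge_output p i j t r 0| <= e.

Lemma edge_output0 i j t : edge_output 0 i j t = K *m (x i t - x j t).
Proof. by rewrite /edge_output expr0 mulmx1. Qed.

Lemma outputs_small0 e : 0 < e -> \forall t \near +oo, outputs_small 0 e t.
Proof.
move=> e0; have [am am0 Ham] :=
  finite_pos_lower_bound (fun z : 'I_Q * 'I_N * 'I_N => a z.1.1 z.1.2 z.2).
apply: filterS (disagreement_vanishes (mulr_gt0 am0 (mulr_gt0 e0 e0))) => t Ht i j aij r.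
rewrite edge_output0; set v := K *m (x i t - x j t).
have := disagreement_ge_term (sigma t) t i j; rewrite -/v => Wij.
have amij : am <= a (sigma t) i j by apply: (Ham (sigma t, i, j)).
have h1 := vdot_ge0 v; have h2 := vdot_sqr_coord v r.
rewrite -ler_sqr ?nnegrE ?(ltW e0) // real_normK ?num_real; nra.
Qed.

Lemma coupling_diff_small e i j t : 0 <= e -> outputs_small 0 e t ->
  norm1 (coupling i t - coupling j t) <= 2 * (wtot * (m%:R * e)).
Proof.
move=> e0 He; have bound l : norm1 (coupling l t) <= wtot * (m%:R * e).
  apply: norm1_weighted_sum_le => [|l' all']; first by rewrite mulr_ge0.
  have := @norm1_le _ _ _ (K *m (x l' t - x l t)) e; rewrite muln1; apply=> r c.
  by rewrite [c]ord1 -edge_output0; apply: He; rewrite weight_sym.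
by apply: le_trans (norm1B _ _) _; have := bound i; have := bound j; lra.
Qed.

Lemma edge_output_deriv p i j t :
  K *m A ^+ p *m (xdot i t - xdot j t) =
  edge_output p.+1 i j t + phi *: (K *m A ^+ p *m B *m (coupling i t - coupling j t)).
Proof.
rewrite !xdot_coupling opprD addrACA -mulmxBr -scalerBr -mulmxBr mulmxDr.
by rewrite /edge_output exprSr -mulmxE -scalemxAr !mulmxA.
Qed.

(* Landau's inequality on a dwell interval [s, s + d] of the mode [k]: there
   [edge_output p] has derivative [K A^p (xdot i - xdot j)] and second derivative
   [K A^p (vfield k xdot i - vfield k xdot j)]. *)
Lemma edge_output_deriv_small p k i j r s d t eta L : 0 <= s -> 0 < d ->
  s <= t <= s + d -> (forall u, s <= u <= s + d -> sigma u = k) ->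
  (forall u, 0 <= u ->
     `|(K *m A ^+ p *m (vfield k (xdot^~ u) i - vfield k (xdot^~ u) j)) r 0| <= L) ->
  (forall u, s <= u <= s + d -> `|edge_output p i j u r 0| <= eta) ->
  `|(K *m A ^+ p *m (xdot i t - xdot j t)) r 0| <= 2 * eta / d + L * d.
Proof.
move=> s0 d0 tin sk HL Heta; rewrite /xdot sk //.
apply: (landau_interval (a := s) (L := L) (eta := eta)
  (g := fun u => edge_output p i j u r 0)
  (h := fun u => (K *m A ^+ p *m (vfield k (x^~ u) i - vfield k (x^~ u) j)) r 0)
  (h2 := fun u => (K *m A ^+ p *m (vfield k (xdot^~ u) i - vfield k (xdot^~ u) j)) r 0))
  => // u /andP[su ud].
- have cx l := x_continuous (i := l) (ltac:(lra) : 0 < u).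
  split; apply: coordwise_continuous_mulmx; apply: coordwise_continuousB => //;
    exact: vfield_continuous.
- have u0 : 0 <= u by lra.
  have dx l := xdot_right_deriv (i := l) u0.
  split; last exact: HL.
    have Hg : coordwise_right_deriv (fun s => K *m A ^+ p *m (x i s - x j s)) u
        (K *m A ^+ p *m (xdot i u - xdot j u)).
      exact: coordwise_right_deriv_mulmx (coordwise_right_derivB (dx i) (dx j)).
    by have := Hg r; rewrite /xdot sk ?su ?ltW.
  by apply: coordwise_right_deriv_mulmx; apply: coordwise_right_derivB; apply: vfield_right_deriv.
Qed.

Lemma edge_output_succ_bound p : exists2 L, 0 <= L & exists2 c, 0 <= c &
  forall i j r t s d eta e1, 0 <= s -> 0 < d -> s <= t <= s + d ->
  (forall u, s <= u <= s + d -> sigma u = sigma t) -> 0 < a (sigma t) i j ->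
  (forall u, s <= u <= s + d -> outputs_small p eta u) ->
  0 <= e1 -> outputs_small 0 e1 t ->
  `|edge_output p.+1 i j t r 0| <= 2 * eta / d + L * d + c * e1.
Proof.
have [C2 C20 HC2] := xddot_bounded.
exists (norm1 (K *m A ^+ p) * (C2 + C2)); first by rewrite mulr_ge0 ?norm1_ge0 ?addr_ge0.
exists (phi * norm1 (K *m A ^+ p *m B) * (2 * (wtot * m%:R))).
  by rewrite !mulr_ge0 ?norm1_ge0 ?wtot_ge0 ?(ltW phi_gt0).
move=> i j r t s d eta e1 s0 d0 tin sk aij Heta e10 H0.
have Hd : `|(K *m A ^+ p *m (xdot i t - xdot j t)) r 0|
    <= 2 * eta / d + norm1 (K *m A ^+ p) * (C2 + C2) * d.
  apply: (edge_output_deriv_small (k := sigma t) s0 d0 tin sk) => [u u0|u uin].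
    apply: le_trans (norm1_coord _ r 0) _; apply: le_trans (norm1_mul _ _) _.
    apply: ler_wpM2l; first exact: norm1_ge0.
    by apply: le_trans (norm1B _ _) _; rewrite lerD ?HC2.
  by apply: (Heta u uin); rewrite sk.
have Hcoup : `|(phi *: (K *m A ^+ p *m B *m (coupling i t - coupling j t))) r 0|
    <= phi * norm1 (K *m A ^+ p *m B) * (2 * (wtot * m%:R)) * e1.
  apply: le_trans (norm1_coord _ r 0) _.
  rewrite norm1Z (ger0_norm (ltW phi_gt0)) -!mulrA; apply: ler_wpM2l; first exact: ltW.
  apply: le_trans (norm1_mul _ _) _; apply: ler_wpM2l; first exact: norm1_ge0.
  exact: coupling_diff_small.
move: Hd; rewrite edge_output_deriv mxE => Hd.
have := ler_normB (edge_output p.+1 i j t r 0 + (phi *: (K *m A ^+ p *m B *m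
  (coupling i t - coupling j t))) r 0) ((phi *: (K *m A ^+ p *m B *m
  (coupling i t - coupling j t))) r 0).
by rewrite addrK; lra.
Qed.

(* On a dwell interval ending or starting at [t], Landau's inequality turns the
   smallness of [edge_output p] into that of its derivative, which is
   [edge_output p.+1] up to the coupling terms, small by the case [p = 0]. *)
Lemma outputs_small_succ p :
  (forall e, 0 < e -> \forall t \near +oo, outputs_small p e t) ->
  forall e, 0 < e -> \forall t \near +oo, outputs_small p.+1 e t.
Proof.
move=> IH e e0; have [L L0 [c c0 Hsucc]] := edge_output_succ_bound p.
have e30 : 0 < e / 3 by rewrite divr_gt0.
have [d d0 [dT dL]] := dwell_step_exists (divr_gt0 e30 (ltr_wpDl L0 ltr01)).
have Ld : L * d <= e / 3.
  by apply: le_trans (mul_div_succ_le L0 (ltW e30)); rewrite ler_wpM2l.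
have eta0 : 0 < e * d / 6 by rewrite divr_gt0 ?mulr_gt0.
have etad : 2 * (e * d / 6) / d = e / 3 by field; rewrite gt_eqF.
have e10 : 0 < e / 3 / (c + 1) by rewrite divr_gt0 // ltr_wpDl.
have ce1 : c * (e / 3 / (c + 1)) <= e / 3 := mul_div_succ_le c0 (ltW e30).
have /near_pinftyP [T1 T10 H1] := IH _ eta0.
have /near_pinftyP [T2 T20 H2] := outputs_small0 e10.
apply/near_pinftyP; exists (T1 + T2 + d) => [|t tT i j aij r]; first lra.
have [s [s0 /andP[ts st] sk]] := dwell_interval sigma_dwell (ltac:(lra) : 0 <= t) d0 dT.
have Heta u : s <= u <= s + d -> outputs_small p (e * d / 6) u.
  by move=> /andP[su _]; apply: H1; lra.
have := Hsucc i j r t s d _ _ s0 d0 (ltac:(lra)) sk aij Heta (ltW e10) (H2 t (ltac:(lra))).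
by rewrite etad; lra.
Qed.

Lemma outputs_small_all p e : 0 < e -> \forall t \near +oo, outputs_small p e t.
Proof. by elim: p e => [|p IH]; [apply: outputs_small0 | apply: outputs_small_succ]. Qed.

Hypothesis KA_observable : observable K A.

Lemma active_edges_synchronize e : 0 < e ->
  \forall t \near +oo, forall i j, 0 < a (sigma t) i j -> norm1 (x i t - x j t) <= e.
Proof.
move=> e0; have /row_fullP[Lo LoK] : row_full (obs_mx K A) by rewrite /row_full KA_observable.
set c := norm1 Lo * ((\sum_(q < n) m) * 1)%:R.
have c0 : 0 <= c by rewrite mulr_ge0 ?norm1_ge0.
have e10 : 0 < e / (c + 1) by rewrite divr_gt0 // ltr_wpDl.
apply: filterS (filter_forall _ (fun q : 'I_n => outputs_small_all q e10)) => t Ht i j aij.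
rewrite -[x i t - x j t]mul1mx -LoK -mulmxA; apply: le_trans (norm1_mul _ _) _.
apply: le_trans (mul_div_succ_le c0 (ltW e0)); rewrite /c -mulrA ler_wpM2l ?norm1_ge0 //.
apply: norm1_le => q c'; rewrite /obs_mx mxcol_mul /mxcol mxE [c']ord1.
exact: Ht.
Qed.

Lemma pair_drift : exists2 kappa, 0 <= kappa & forall e, 0 < e ->
  \forall t1 \near +oo, forall t2 u v, t1 <= t2 ->
    qform P (x u t2 - x v t2) <= qform P (x u t1 - x v t1) + kappa * e * (t2 - t1).
Proof.
have [Cx Cx0 Hx] := state_bounded.
set kappa := 2 * phi * (norm1 K * (Cx + Cx)) * (2 * (wtot * m%:R)).
exists kappa => [|e e0].
  by rewrite !mulr_ge0 ?norm1_ge0 ?wtot_ge0 ?addr_ge0 ?(ltW phi_gt0).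
have /near_pinftyP [T0 T00 HT] := outputs_small0 e0.
apply/near_pinftyP; exists T0 => // t1 t1T t2 u v t12.
suff : qform P (x u t2 - x v t2) - qform P (x u t1 - x v t1) <= kappa * e * (t2 - t1).
  by lra.
apply: (mean_value_le (f := fun s => qform P (x u s - x v s))) => // s /andP[t1s _].
  by apply: continuous_qform; apply: coordwise_continuousB; apply: x_continuous; lra.
have s0 : 0 <= s by lra.
eexists; first exact: has_right_deriv_qform P_sym
  (coordwise_right_derivB (xdot_right_deriv (i := u) s0) (xdot_right_deriv (i := v) s0)).
rewrite !xdot_coupling opprD addrACA -mulmxBr -scalerBr -mulmxBr vdot_P_field.
have Hs := HT s (ltac:(lra)).
have : `|vdot (K *m (x u s - x v s)) (coupling u s - coupling v s)|
    <= norm1 K * (Cx + Cx) * (2 * (wtot * (m%:R * e))).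
  apply: le_trans (norm1_vdot _ _) _; apply: ler_pM; rewrite ?norm1_ge0 //.
    apply: le_trans (norm1_mul _ _) _; apply: ler_wpM2l; first exact: norm1_ge0.
    by apply: le_trans (norm1B _ _) _; rewrite lerD ?Hx.
  exact: coupling_diff_small (ltW e0) Hs.
set D := vdot _ _ => HD; have := AP_negsemidef (x u s - x v s).
have -> : kappa * e = 2 * phi * (norm1 K * (Cx + Cx) * (2 * (wtot * (m%:R * e)))).
  by rewrite /kappa; ring.
have : 2 * phi * D <= 2 * phi * `|D| by rewrite ler_wpM2l ?ler_norm // mulr_ge0 // ltW.
have : 2 * phi * `|D| <= 2 * phi * (norm1 K * (Cx + Cx) * (2 * (wtot * (m%:R * e)))).
  by rewrite ler_wpM2l // mulr_ge0 // ltW.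
lra.
Qed.

(* An edge of the union graph on [t - T, t) was active at some [tau] after
   which the difference along it could drift by at most [kappa e T]. *)
Lemma union_edges_small (T e : R) : 0 < T -> 0 < e ->
  \forall t \near +oo, forall w z,
    union_edge a sigma (t - T) T w z -> `|x w t - x z t| <= e.
Proof.
move=> T0 e0; have [c c0 Hc] := qform_coercive P_posdef.
have [kappa kappa0 drift] := pair_drift.
set eta := e ^+ 2 / (c + 1).
have eta0 : 0 < eta by rewrite divr_gt0 ?exprn_gt0 // ltr_wpDl.
have small_of_qform v : qform P v <= eta -> `|v| <= e.
  move=> qv; apply: le_trans (mx_norm_le_norm1 v) _.
  rewrite -ler_sqr ?nnegrE ?norm1_ge0 ?(ltW e0) //; apply: le_trans (Hc v) _.
  by apply: le_trans (ler_wpM2l c0 qv) _; apply: mul_div_succ_le; rewrite ?sqr_ge0.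
set e2 := Num.min 1 (eta / 2 / (norm1 P + 1)).
have nP1 : 0 < norm1 P + 1 by have := norm1_ge0 P; lra.
have eta2 : 0 < eta / 2 by rewrite divr_gt0.
have e20 : 0 < e2 by rewrite /e2 lt_min ltr01 divr_gt0.
have qform_of_small v : norm1 v <= e2 -> qform P v <= eta / 2.
  move=> ve2; apply: le_trans (qform_le_norm1 P v) _.
  have e21 : e2 <= 1 by rewrite /e2 ge_min lexx.
  have e2q : e2 <= eta / 2 / (norm1 P + 1) by rewrite /e2 ge_min lexx orbT.
  have v2 : norm1 v ^+ 2 <= e2 by have := norm1_ge0 v; nra.
  apply: le_trans (ler_wpM2l (norm1_ge0 P) v2) _.
  exact: le_trans (ler_wpM2l (norm1_ge0 P) e2q) (mul_div_succ_le (norm1_ge0 P) (ltW eta2)).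
have kT1 : 0 < kappa * T + 1 by have := mulr_ge0 kappa0 (ltW T0); lra.
have ekT0 : 0 < eta / 2 / (kappa * T + 1) by rewrite divr_gt0.
have kT : kappa * (eta / 2 / (kappa * T + 1)) * T <= eta / 2.
  rewrite mulrAC; apply: mul_div_succ_le; first by rewrite mulr_ge0 // ltW.
  by rewrite divr_ge0 // ltW.
have /near_pinftyP [Ta Ta0 Ha] := active_edges_synchronize e20.
have /near_pinftyP [Tb Tb0 Hb] := drift _ ekT0.
apply/near_pinftyP; exists (Ta + Tb + T) => [|t tT w z [tau [/andP[tau1 tau2] azw]]].
  by lra.
have := Ha tau (ltac:(lra)) w z; rewrite weight_sym => /(_ azw)/qform_of_small q1.
have := Hb tau (ltac:(lra)) t w z (ltac:(lra)).
have : kappa * (eta / 2 / (kappa * T + 1)) * (t - tau) <=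
       kappa * (eta / 2 / (kappa * T + 1)) * T.
  by apply: ler_wpM2l; [apply: mulr_ge0 kappa0 (ltW ekT0) | lra].
by move=> h1 h2; apply: small_of_qform; lra.
Qed.
End SwitchedNetwork.

Theorem theorem3 (R : realType) (N n m Q : nat)
  (a : 'I_Q -> 'M[R]_N) (sigma : R -> 'I_Q) (Tmin T phi : R)
  (A : 'M[R]_n) (B : 'M[R]_(n, m)) (P : 'M[R]_n)
  (x : 'I_N -> R -> 'cV[R]_n) :
  (2 <= N)%N -> (1 <= n)%N -> (1 <= m)%N ->
  (forall k, undirected_weights (a k)) ->
  dwell_switching sigma Tmin ->
  0 < T ->
  (forall t0 : R, 0 <= t0 -> has_spanning_tree (union_edge a sigma t0 T)) ->
  stabilizable A B ->
  sym_posdef P ->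
  neg_semidef (A^T *m P + P *m A) ->
  observable (B^T *m P) A ->
  0 < phi ->
  network_solution A B (B^T *m P) phi a sigma x ->
  forall i j : 'I_N, `|x i t - x j t| @[t --> +oo] --> (0 : R).
Proof.
move=> N2 _ _ a_undir dwell T0 spanning _ P_pd AP_nsd KA_obs phi0 x_sol i j.
apply/cvgrPdist_le => eps eps0.
have N0 : 0 < N%:R :> R by rewrite ltr0n; lia.
set beta := eps / (2 * N%:R).
have beta0 : 0 < beta by rewrite divr_gt0 // mulr_gt0.
have edges := union_edges_small a_undir dwell P_pd AP_nsd phi0 x_sol KA_obs T0 beta0.
apply: filterS (filterI edges (nbhs_pinfty_ge (num_real T))) => t [small Tt].
have [r root] := spanning (t - T) (ltac:(lra)).
have from_root l : `|x r t - x l t| <= N.-1%:R * beta.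
  have [->|lr] := eqVneq l r.
    by rewrite subrr normr0; apply: mulr_ge0 (ler0n _ _) (ltW beta0).
  exact: clos_trans_norm_le (ltW beta0) small (root l (elimN eqP lr)).
have Nbeta : N.-1%:R * beta * 2 <= eps.
  have : N.-1%:R <= N%:R :> R by rewrite ler_nat leq_pred.
  have : N%:R * beta * 2 = eps by rewrite /beta; field; rewrite gt_eqF.
  have := ltW beta0; nra.
rewrite sub0r normrN normr_id -(subrKA (x r t)).
apply: le_trans (ler_normD _ _) _; rewrite distrC.
by have := from_root i; have := from_root j; lra.
Qed.
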